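(* Let $(G,\alpha,\mathcal A)$ and $(G,\beta,\mathcal B)$ be unital $C^*$-dynamical systems of a finite group $G$, let $E$ be a $\mathcal B$-$\mathcal A$ Hilbert bimodule which is full with respect to both inner products, and let $\eta$ be a $(\beta,\alpha)$-compatible action of $G$ on $E$. If $\eta$ has the Rokhlin property, then $\eta$ is outer.
   Context: A $\mathcal B$-$\mathcal A$ Hilbert bimodule $E$ is a left Hilbert $\mathcal B$-module and right Hilbert $\mathcal A$-module with ${}_{\mathcal B}\langle x,y\rangle z=x\langle y,z\rangle_{\mathcal A}$; full means both inner products have dense span in $\mathcal B$, resp. $\mathcal A$. A $(\beta,\alpha)$-compatible action: $\eta_g$ invertible linear maps, $g\mapsto\eta_g$ a homomorphism, with $\eta_g(bx)=\beta_g(b)\eta_g(x)$, $\eta_g(xa)=\eta_g(x)\alpha_g(a)$, ${}_{\mathcal B}\langle\eta_gx,\eta_gy\rangle=\beta_g({}_{\mathcal B}\langle x,y\rangle)$, $\langle\eta_gx,\eta_gy\rangle_{\mathcal A}=\alpha_g(\langle x,y\rangle_{\mathcal A})$. Rokhlin property of $\eta$: for every $\epsilon>0$, finite $S_1,S_2\subset E$, $S_3\subset\mathcal B$, $S_4\subset\mathcal A$ there are mutually orthogonal positive contractions $(a_g)_{g\in G}\subset\mathcal A$ and $(b_g)_{g\in G}\subset\mathcal B$ with $\|\sum_ga_gu-u\|<\epsilon$ ($u\in S_2^*\cup S_4$), $\|\sum_gb_gv-v\|<\epsilon$ ($v\in S_1\cup S_3$), $\|\alpha_h(a_g)-a_{hg}\|<\epsilon$,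 $\|\beta_h(b_g)-b_{hg}\|<\epsilon$, $\|xa_g-b_gx\|<\epsilon$, $\|tb_g-b_gt\|<\epsilon$, $\|a_ga-aa_g\|<\epsilon$, $\|a_gy^*-y^*b_g\|<\epsilon$ for all $x\in S_1,y\in S_2,t\in S_3,a\in S_4$, $g,h\in G$. For unitaries $u\in\mathcal A$, $u'\in\mathcal B$, $\mathrm{Ad}(u',u)(x):=u'^*xu$. $\eta$ is outer if for every $t\in G\setminus\{e\}$, $\eta_t\ne\mathrm{Ad}(u',u)$ for all unitaries $u\in\mathcal A$, $u'\in\mathcal B$. *)

From HB Require Import structures.
From mathcomp Require Import all_boot all_order fingroup all_algebra.
From mathcomp Require Import complex reals.
Set Implicit Arguments. Unset Strict Implicit. Unset Printing Implicit Defensive.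
Import Order.TTheory GRing.Theory Num.Theory.
Local Open Scope ring_scope.
Local Open Scope complex_scope.

Section Defs.
Variable R : realType.
Local Notation C := R[i].

Definition complete_wrt (V : zmodType) (n : V -> R) : Prop :=
  forall u : nat -> V,
    (forall e : R, 0 < e -> exists N : nat, forall p q : nat,
        (N <= p)%N -> (N <= q)%N -> n (u p - u q) < e) ->
    exists l : V, forall e : R, 0 < e -> exists N : nat, forall p : nat,
        (N <= p)%N -> n (u p - l) < e.

Definition is_cstar_algebra (A : algType C) (st : A -> A) (nrm : A -> R) : Prop :=
  [/\
   [/\ (forall a b : A, st (a + b) = st a + st b),
      (forall (c : C) (a : A), st (c *: a) = conjc c *: st a),
      (forall a b : A, st (a * b) = st b * st a) &
      (forall a : A, st (st a) = a)],
   [/\ (forall a : A, nrm a = 0 <-> a = 0),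
      (forall a b : A, nrm (a + b) <= nrm a + nrm b),
      (forall (c : C) (a : A), (nrm (c *: a))%:C = `|c| * (nrm a)%:C) &
      (forall a b : A, nrm (a * b) <= nrm a * nrm b)],
    (forall a : A, nrm (st a * a) = nrm a ^+ 2) &
    complete_wrt nrm].

Definition cpositive (A : algType C) (st : A -> A) (a : A) : Prop :=
  exists b : A, a = st b * b.

Definition positive_contraction (A : algType C) (st : A -> A) (nrm : A -> R)
  (a : A) : Prop := cpositive st a /\ nrm a <= 1.

Definition unitary (A : algType C) (st : A -> A) (u : A) : Prop :=
  st u * u = 1 /\ u * st u = 1.

Definition star_automorphism (A : algType C) (st : A -> A) (f : A -> A) : Prop :=
  [/\ (forall a b : A, f (a + b) = f a + f b) /\
      (forall (c : C) (a : A), f (c *: a) = c *: f a),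
      (forall a b : A, f (a * b) = f a * f b),
      f 1 = 1,
      (forall a : A, f (st a) = st (f a)) &
      bijective f].

Definition cstar_action (G : finGroupType) (A : algType C) (st : A -> A)
  (alpha : G -> A -> A) : Prop :=
  [/\ (forall g : G, star_automorphism st (alpha g)),
      (forall g h : G, alpha (g * h)%g =1 alpha g \o alpha h) &
      alpha 1%g =1 id].

(* B-A Hilbert bimodules.  E is a complex vector space, [lb] the left  *)
(* B-action, [ra] the right A-action, [ipB] = _B<.,.>, [ipA] = <.,.>_A. *)
Definition right_hilbert_module (A : algType C) (stA : A -> A) (nA : A -> R)
  (E : lmodType C) (ra : E -> A -> E) (ipA : E -> E -> A) : Prop :=
  [/\
      [/\ (forall (x y : E) (a : A), ra (x + y) a = ra x a + ra y a),
          (forall (x : E) (a b : A), ra x (a + b) = ra x a + ra x b),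
          (forall (x : E) (a b : A), ra (ra x a) b = ra x (a * b)),
          (forall (c : C) (x : E) (a : A), ra (c *: x) a = c *: ra x a) &
          (forall (c : C) (x : E) (a : A), ra x (c *: a) = c *: ra x a)],
      [/\ (forall x y z : E, ipA x (y + z) = ipA x y + ipA x z),
          (forall (c : C) (x y : E), ipA x (c *: y) = c *: ipA x y),
          (forall (x y : E) (a : A), ipA x (ra y a) = ipA x y * a) &
          (forall x y : E, stA (ipA x y) = ipA y x)],
      (forall x : E, cpositive stA (ipA x x)),
      (forall x : E, ipA x x = 0 -> x = 0) &
      complete_wrt (fun x : E => Num.sqrt (nA (ipA x x)))].

Definition left_hilbert_module (B : algType C) (stB : B -> B) (nB : B -> R)
  (E : lmodType C) (lb : B -> E -> E) (ipB : E -> E -> B) : Prop :=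
  [/\
      [/\ (forall (b : B) (x y : E), lb b (x + y) = lb b x + lb b y),
          (forall (a b : B) (x : E), lb (a + b) x = lb a x + lb b x),
          (forall (a b : B) (x : E), lb a (lb b x) = lb (a * b) x),
          (forall (c : C) (b : B) (x : E), lb b (c *: x) = c *: lb b x) &
          (forall (c : C) (b : B) (x : E), lb (c *: b) x = c *: lb b x)],
      [/\ (forall x y z : E, ipB (x + y) z = ipB x z + ipB y z),
          (forall (c : C) (x y : E), ipB (c *: x) y = c *: ipB x y),
          (forall (b : B) (x y : E), ipB (lb b x) y = b * ipB x y) &
          (forall x y : E, stB (ipB x y) = ipB y x)],
      (forall x : E, cpositive stB (ipB x x)),
      (forall x : E, ipB x x = 0 -> x = 0) &
      complete_wrt (fun x : E => Num.sqrt (nB (ipB x x)))].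

Definition hilbert_bimodule (A B : algType C) (stA : A -> A) (nA : A -> R)
  (stB : B -> B) (nB : B -> R) (E : lmodType C) (lb : B -> E -> E)
  (ra : E -> A -> E) (ipB : E -> E -> B) (ipA : E -> E -> A) : Prop :=
  [/\ left_hilbert_module stB nB lb ipB,
      right_hilbert_module stA nA ra ipA,
      (forall (b : B) (x : E) (a : A), ra (lb b x) a = lb b (ra x a)) &
      (forall x y z : E, lb (ipB x y) z = ra x (ipA y z))].

Definition full_ip (A : algType C) (nA : A -> R) (E : Type) (ip : E -> E -> A)
  : Prop :=
  forall (a : A) (e : R), 0 < e ->
    exists s : seq ((C * E) * E),
      nA (a - \sum_(p <- s) p.1.1 *: ip p.1.2 p.2) < e.

Definition hnorm (A : algType C) (nA : A -> R) (E : Type) (ipA : E -> E -> A)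
  (x : E) : R := Num.sqrt (nA (ipA x x)).

Definition compatible_action (G : finGroupType) (A B : algType C)
  (E : lmodType C) (lb : B -> E -> E) (ra : E -> A -> E)
  (ipB : E -> E -> B) (ipA : E -> E -> A)
  (alpha : G -> A -> A) (beta : G -> B -> B) (eta : G -> E -> E) : Prop :=
  [/\ (forall g : G, (forall x y : E, eta g (x + y) = eta g x + eta g y) /\
                     (forall (c : C) (x : E), eta g (c *: x) = c *: eta g x)),
      (forall g : G, bijective (eta g)),
      (forall g h : G, eta (g * h)%g =1 eta g \o eta h) &
      [/\ (forall (g : G) (b : B) (x : E), eta g (lb b x) = lb (beta g b) (eta g x)),
          (forall (g : G) (x : E) (a : A), eta g (ra x a) = ra (eta g x) (alpha g a)),
          (forall (g : G) (x y : E), ipB (eta g x) (eta g y) = beta g (ipB x y)) &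
          (forall (g : G) (x y : E), ipA (eta g x) (eta g y) = alpha g (ipA x y))]].

(* Rokhlin property.  The conditions on S_2^* (adjoints y^* in the dual
   bimodule) are expressed through y itself, using a.y^* = (y a^* )^*,
   y^* b = (b^* y)^* and the isometry of y |-> y^*. *)
Definition rokhlin (G : finGroupType) (A B : algType C)
  (stA : A -> A) (nA : A -> R) (stB : B -> B) (nB : B -> R)
  (E : lmodType C) (lb : B -> E -> E) (ra : E -> A -> E) (ipA : E -> E -> A)
  (alpha : G -> A -> A) (beta : G -> B -> B) : Prop :=
  forall (e : R), 0 < e ->
  forall (S1 S2 : seq E) (S3 : seq B) (S4 : seq A),
  exists (a : G -> A) (b : G -> B),
    [/\ [/\ (forall g : G, positive_contraction stA nA (a g)),
            (forall g : G, positive_contraction stB nB (b g)),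
            (forall g h : G, g != h -> a g * a h = 0) &
            (forall g h : G, g != h -> b g * b h = 0)],
        [/\ (forall y, y \in S2 -> hnorm nA ipA (ra y (\sum_(g : G) a g) - y) < e),
            (forall u, u \in S4 -> nA ((\sum_(g : G) a g) * u - u) < e),
            (forall v, v \in S1 -> hnorm nA ipA (lb (\sum_(g : G) b g) v - v) < e) &
            (forall v, v \in S3 -> nB ((\sum_(g : G) b g) * v - v) < e)],
        (forall g h : G, nA (alpha h (a g) - a (h * g)%g) < e),
        (forall g h : G, nB (beta h (b g) - b (h * g)%g) < e) &
        [/\ (forall (x : E) (g : G), x \in S1 ->
               hnorm nA ipA (ra x (a g) - lb (b g) x) < e),
            (forall (t : B) (g : G), t \in S3 -> nB (t * b g - b g * t) < e),
            (forall (c : A) (g : G), c \in S4 -> nA (a g * c - c * a g) < e) &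
            (forall (y : E) (g : G), y \in S2 ->
               hnorm nA ipA (ra y (a g) - lb (b g) y) < e)]].

Definition Ad (A B : algType C) (stB : B -> B) (E : Type)
  (lb : B -> E -> E) (ra : E -> A -> E) (u' : B) (u : A) : E -> E :=
  fun x => ra (lb (stB u') x) u.

Definition outer (G : finGroupType) (A B : algType C)
  (stA : A -> A) (stB : B -> B) (E : Type)
  (lb : B -> E -> E) (ra : E -> A -> E) (eta : G -> E -> E) : Prop :=
  forall t : G, t != 1%g ->
  forall (u : A) (u' : B), unitary stA u -> unitary stB u' ->
    eta t <> Ad stB lb ra u' u.

End Defs.

From HB Require Import structures.
From mathcomp Require Import all_boot all_order fingroup all_algebra.
From mathcomp Require Import complex reals lra.
Set Implicit Arguments. Unset Strict Implicit. Unset Printing Implicit Defensive.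
Import Order.TTheory GRing.Theory Num.Theory.
Local Open Scope ring_scope.
Local Open Scope complex_scope.

(* If eta_t = Ad(u', u), then
   alpha_t(<x, y>_A) = <eta_t x, eta_t y>_A = u^* <x, y>_A u, and since the inner products span a dense right ideal containing elements
   arbitrarily close to 1, alpha_t = Ad u on all of A.  Now take Rokhlin
   elements a_g almost commuting with u and with alpha_t(a_g) close to a_(t g).
   Then a_g is close to u^* a_g u = alpha_t(a_g), hence to a_(t g); as
   a_g a_(t g) = 0 with a_g positive, the C*-identity gives
   ||a_g|| <= ||a_g - a_(t g)||, so every a_g is small, contradicting
   sum_g a_g ~ 1. *)

Lemma le0_of_le_eps_mul (R : realFieldType) (x K : R) : 0 <= K ->
  (forall e, 0 < e -> x <= e * K) -> x <= 0.
Proof.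
move=> K_ge0 xle; case: (lerP x 0) => // x_gt0.
have K1_gt0 : 0 < K + 1 by lra.
have := xle (x / (K + 1)) (divr_gt0 x_gt0 K1_gt0).
have : x / (K + 1) * (K + 1) = x by rewrite mulfVK // gt_eqF.
nra.
Qed.

Section CstarAlgebra.
Variables (R : realType) (A : algType R[i]) (st : A -> A) (n : A -> R).
Hypothesis hA : is_cstar_algebra st n.

Lemma cnorm0 : n 0 = 0.
Proof. by case: hA => _ [h _ _ _] _ _; exact/(h 0).2. Qed.

Lemma cnorm_eq0 a : n a = 0 -> a = 0.
Proof. by case: hA => _ [h _ _ _] _ _; exact/(h a).1. Qed.

Lemma cnormD a b : n (a + b) <= n a + n b.
Proof. by case: hA => _ [_ h _ _] _ _; apply/h. Qed.

Lemma cnormM a b : n (a * b) <= n a * n b.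
Proof. by case: hA => _ [_ _ _ h] _ _; apply/h. Qed.

Lemma cnormN a : n (- a) = n a.
Proof.
case: hA => _ [_ _ h _] _ _.
by have := h (-1) a; rewrite scaleN1r normrN1 mul1r; case.
Qed.

Lemma cnorm_ge0 a : 0 <= n a.
Proof.
have := cnormD a (- a); rewrite subrr cnorm0 cnormN; lra.
Qed.

Lemma cnormB a b : n (a - b) <= n a + n b.
Proof. by rewrite -(cnormN b) cnormD. Qed.

Lemma cnorm_sum (I : finType) (f : I -> A) : n (\sum_i f i) <= \sum_i n (f i).
Proof.
elim/big_ind2: _ => [|x1 y1 x2 y2 le1 le2|//]; first by rewrite cnorm0.
exact: le_trans (cnormD _ _) (lerD le1 le2).
Qed.

Lemma cnorm1_gt0 : 0 < n 1.
Proof.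
rewrite lt_def cnorm_ge0 andbT; apply/eqP => /cnorm_eq0/eqP.
by rewrite oner_eq0.
Qed.

Lemma cstar_mul a b : st (a * b) = st b * st a.
Proof. by case: hA => [[_ _ h _]] _ _ _; apply/h. Qed.

Lemma cstarK a : st (st a) = a.
Proof. by case: hA => [[_ _ _ h]] _ _ _; apply/h. Qed.

Lemma cpositive_selfadjoint a : cpositive st a -> st a = a.
Proof. by case=> b ->; rewrite cstar_mul cstarK. Qed.

(* For positive a the C*-identity reads ||a||^2 = ||a a||, and a a = a (a - b). *)
Lemma cnorm_le_orthogonal a b : cpositive st a -> a * b = 0 -> n a <= n (a - b).
Proof.
case: hA => _ _ cstar_id _ a_pos ab0.
have : n a ^+ 2 <= n a * n (a - b).
  by rewrite -cstar_id cpositive_selfadjoint // -[a * a]subr0 -ab0 -mulrBr cnormM.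
have := cnorm_ge0 a; have := cnorm_ge0 (a - b); nra.
Qed.

Lemma cnorm_conj_sub u c : st u * u = 1 ->
  n (st u * c * u - c) <= n (st u) * n (c * u - u * c).
Proof.
move=> uu1; rewrite -[c in _ - c]mul1r -uu1 -!mulrA -mulrBr.
exact: cnormM.
Qed.

Lemma cnorm1_lt_sum (I : finType) (a : I -> A) (d e : R) :
  (forall i, n (a i) <= d) -> n (\sum_i a i - 1) < e -> n 1 < #|I|%:R * d + e.
Proof.
move=> a_le sum_lt.
have sum_le : n (\sum_i a i) <= #|I|%:R * d.
  apply: le_trans (cnorm_sum _) _.
  by rewrite -sum1_card natr_sum mulr_suml; apply: ler_sum => i _; rewrite mul1r.
have := cnormB (\sum_i a i) (\sum_i a i - 1).
rewrite opprB addrC subrK; lra.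
Qed.

(* Split c = d c + (1 - d) c: f and Ad u agree on d c, and ||1 - d|| is small. *)
Lemma eq_conj_of_dense_right_ideal (f : A -> A) (u : A) (D : A -> Prop) :
  {morph f : x y / x + y} -> {morph f : x y / x * y} -> f 1 = 1 ->
  st u * u = 1 ->
  (forall d c, D d -> D (d * c)) ->
  (forall e, 0 < e -> exists2 d, D d & n (1 - d) < e) ->
  (forall d, D d -> f d = st u * d * u) ->
  forall c, f c = st u * c * u.
Proof.
move=> fD fM f1 uu1 Dr Ddense fDconj c.
apply/eqP; rewrite -subr_eq0; apply/eqP/cnorm_eq0/eqP.
rewrite eq_le cnorm_ge0 andbT.
apply: (@le0_of_le_eps_mul _ _ (n (st u) * n (u * f c - c * u))).
  by rewrite mulr_ge0 ?cnorm_ge0.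
move=> e e_gt0; have [d Dd d_near1] := Ddense e e_gt0.
have f1d : f (1 - d) = st u * (1 - d) * u.
  apply: (addIr (f d)); rewrite -fD subrK f1 fDconj //.
  by rewrite -mulrDl -mulrDr subrK mulr1 uu1.
have split_c : c = d * c + (1 - d) * c by rewrite -mulrDl addrC subrK mul1r.
have -> : f c - st u * c * u = st u * (1 - d) * (u * f c - c * u).
  rewrite {1}split_c fD (fDconj _ (Dr _ c Dd)) fM f1d [in X in _ - X = _]split_c.
  rewrite (mulrDr (st u) (d * c)) mulrDl [st u * (d * c) * u + _]addrC addrKA.
  by rewrite [in RHS]mulrBr !mulrA.
apply: le_trans (cnormM _ _) _; rewrite mulrA; apply: ler_wpM2r; first exact: cnorm_ge0.
apply: le_trans (cnormM _ _) _; rewrite mulrC; apply: ler_wpM2r; first exact: cnorm_ge0.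
exact: ltW.
Qed.

Lemma cnorm_lt_orthogonal_conj u a b e : st u * u = 1 -> cpositive st a ->
  a * b = 0 -> n (st u * a * u - b) < e -> n (a * u - u * a) < e ->
  n a < (1 + n (st u)) * e.
Proof.
move=> uu1 a_pos ab0 conj_near comm_near.
have conj_close : n (st u * a * u - a) <= n (st u) * e.
  apply: le_trans (cnorm_conj_sub a uu1) _.
  by apply: ler_wpM2l; [exact: cnorm_ge0 | exact: ltW].
apply: le_lt_trans (cnorm_le_orthogonal a_pos ab0) _.
have -> : a - b = - (st u * a * u - a) + (st u * a * u - b).
  by rewrite opprB addrA subrK.
apply: le_lt_trans (cnormD _ _) _; rewrite cnormN; lra.
Qed.

End CstarAlgebra.

Section HilbertBimodule.
Variables (R : realType) (A B : algType R[i]).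
Variables (stA : A -> A) (nA : A -> R) (stB : B -> B) (nB : B -> R).
Hypotheses (hA : is_cstar_algebra stA nA) (hB : is_cstar_algebra stB nB).
Variables (E : lmodType R[i]) (lb : B -> E -> E) (ra : E -> A -> E)
  (ipB : E -> E -> B) (ipA : E -> E -> A).
Hypothesis hE : hilbert_bimodule stA nA stB nB lb ra ipB ipA.
Hypothesis fullA : full_ip nA ipA.

Definition ip_span (s : seq ((R[i] * E) * E)) : A :=
  \sum_(p <- s) p.1.1 *: ipA p.1.2 p.2.

Lemma ipA0r x : ipA x 0 = 0.
Proof.
case: hE => _ [_ [ipAD _ _ _] _ _ _] _ _.
by apply: (@addrI _ (ipA x 0)); rewrite -ipAD !addr0.
Qed.

Lemma ipA_rar x y c : ipA x (ra y c) = ipA x y * c.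
Proof. by case: hE => _ [_ [_ _ ipAr _] _ _ _] _ _; apply: ipAr. Qed.

Lemma ipA_ral x y c : ipA (ra x c) y = stA c * ipA x y.
Proof.
case: hE => _ [_ [_ _ ipAr symA] _ _ _] _ _.
by rewrite -[ipA (ra x c) y]symA ipAr (cstar_mul hA) symA.
Qed.

Lemma ra_subr z c d : ra z (c - d) = ra z c - ra z d.
Proof.
case: hE => _ [[_ raDr _ _ _] _ _ _ _] _ _.
by apply/eqP; rewrite eq_sym subr_eq -raDr subrK.
Qed.

(* Fullness gives an element of the span within 1/2 of 1, and it kills c - d. *)
Lemma ra_faithful c d : (forall z, ra z c = ra z d) -> c = d.
Proof.
move=> ra_cd; apply/eqP; rewrite -subr_eq0; apply/eqP; set a := c - d.
have ra_a z : ra z a = 0 by rewrite ra_subr ra_cd subrr.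
have [s near1] := fullA 1 (divr_gt0 ltr01 (ltr0Sn R 1)).
have span_a : ip_span s * a = 0.
  rewrite mulr_suml big1_seq // => p _.
  by rewrite -scalerAl -ipA_rar ra_a ipA0r scaler0.
have a_eq : a = (1 - ip_span s) * a by rewrite mulrBl span_a subr0 mul1r.
apply: (cnorm_eq0 hA); apply/eqP; rewrite eq_le (cnorm_ge0 hA) andbT.
have := cnormM hA (1 - ip_span s) a; rewrite -a_eq.
have := cnorm_ge0 hA a; have := ltW near1; rewrite /ip_span; nra.
Qed.

Lemma ipA_lb_adj x y b : ipA x (lb b y) = ipA (lb (stB b) x) y.
Proof.
case: hE => [[[_ _ lbM _ _] [_ _ ipBl symB] _ _ _]] _ _ ip_compat.
apply: ra_faithful => z; rewrite -!ip_compat lbM -[ipB z (lb _ x)]symB ipBl.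
by rewrite (cstar_mul hB) (cstarK hB) symB.
Qed.

Lemma ipA_lb1 x y : ipA (lb 1 x) y = ipA x y.
Proof.
case: hE => [[_ [_ _ ipBl symB] _ _ _]] _ _ ip_compat.
apply: ra_faithful => z; rewrite -!ip_compat -[ipB z (lb _ x)]symB ipBl mul1r.
by rewrite symB.
Qed.

Lemma ipA_Ad u' u x y : unitary stB u' ->
  ipA (Ad stB lb ra u' u x) (Ad stB lb ra u' u y) = stA u * ipA x y * u.
Proof.
case=> _ u'u'_1; rewrite /Ad ipA_ral ipA_rar ipA_lb_adj (cstarK hB).
case: hE => [[[_ _ lbM _ _] _ _ _ _]] _ _ _.
by rewrite lbM u'u'_1 ipA_lb1 mulrA.
Qed.

Lemma ip_span_mulr s c : ip_span s * c = ip_span [seq (p.1, ra p.2 c) | p <- s].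
Proof.
rewrite /ip_span mulr_suml big_map; apply: eq_bigr => p _.
by rewrite ipA_rar scalerAl.
Qed.

Lemma ip_span_conj (f : A -> A) u s :
  {morph f : x y / x + y} -> (forall (k : R[i]) c, f (k *: c) = k *: f c) ->
  (forall x y, f (ipA x y) = stA u * ipA x y * u) ->
  f (ip_span s) = stA u * ip_span s * u.
Proof.
move=> fD fZ f_ip; rewrite /ip_span.
elim: s => [|p s IH]; last first.
  by rewrite !big_cons fD IH fZ f_ip mulrDr mulrDl -scalerAr -scalerAl.
rewrite !big_nil mulr0 mul0r.
by apply: (@addrI _ (f 0)); rewrite -fD !addr0.
Qed.

Lemma conj_of_ip_conj (f : A -> A) u :
  {morph f : x y / x + y} -> (forall (k : R[i]) c, f (k *: c) = k *: f c) ->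
  {morph f : x y / x * y} -> f 1 = 1 -> stA u * u = 1 ->
  (forall x y, f (ipA x y) = stA u * ipA x y * u) ->
  forall c, f c = stA u * c * u.
Proof.
move=> fD fZ fM f1 uu1 f_ip.
apply: (eq_conj_of_dense_right_ideal hA (D := fun d => exists s, d = ip_span s)) => //.
- by move=> _ c [s ->]; exists [seq (p.1, ra p.2 c) | p <- s]; rewrite ip_span_mulr.
- by move=> e /(fullA 1) [s near1]; exists (ip_span s); first exists s.
- by move=> _ [s ->]; apply: ip_span_conj.
Qed.

Lemma alpha_conj_of_eta_Ad (G : finGroupType) alpha beta (eta : G -> E -> E)
    t u u' :
  cstar_action stA alpha -> compatible_action lb ra ipB ipA alpha beta eta ->
  unitary stA u -> unitary stB u' -> eta t = Ad stB lb ra u' u ->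
  forall c, alpha t c = stA u * c * u.
Proof.
case=> /(_ t) [[alD alZ] alM al1 _ _] _ _ [_ _ _ [_ _ _ eta_ipA]] [uu1 _] u'_unit eta_Ad.
by apply: conj_of_ip_conj => // x y; rewrite -eta_ipA eta_Ad ipA_Ad.
Qed.

End HilbertBimodule.

Unset Implicit Arguments.

Theorem corollary5p3 (R : realType) (G : finGroupType)
  (A B : algType R[i])
  (stA : A -> A) (nA : A -> R) (stB : B -> B) (nB : B -> R)
  (hA : is_cstar_algebra stA nA) (hB : is_cstar_algebra stB nB)
  (alpha : G -> A -> A) (beta : G -> B -> B)
  (halpha : cstar_action stA alpha) (hbeta : cstar_action stB beta)
  (E : lmodType R[i]) (lb : B -> E -> E) (ra : E -> A -> E)
  (ipB : E -> E -> B) (ipA : E -> E -> A)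
  (hE : hilbert_bimodule stA nA stB nB lb ra ipB ipA)
  (fullA : full_ip nA ipA) (fullB : full_ip nB ipB)
  (eta : G -> E -> E)
  (heta : compatible_action lb ra ipB ipA alpha beta eta) :
  rokhlin stA nA stB nB lb ra ipA alpha beta ->
  outer stA stB lb ra eta.
Proof.
move=> rok t t_neq1 u u' u_unit u'_unit eta_Ad.
have alpha_conj := alpha_conj_of_eta_Ad hA hB hE fullA halpha heta u_unit u'_unit eta_Ad.
set K := nA (stA u); set N := nA 1.
have N_gt0 : 0 < N := cnorm1_gt0 hA.
have K_ge0 : 0 <= K := cnorm_ge0 hA _.
have den_gt0 : 0 < #|G|%:R * (1 + K) + 1.
  by have := mulr_ge0 (ler0n R #|G|) (addr_ge0 ler01 K_ge0); lra.
pose e := N / (#|G|%:R * (1 + K) + 1).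
have e_gt0 : 0 < e by rewrite divr_gt0.
have [a [_ [[a_pos _ a_orth _] [_ sum_near1 _ _] alpha_a _ [_ _ a_comm _]]]] :=
  rok e e_gt0 [::] [::] [::] [:: u; 1].
have a_small g : nA (a g) <= (1 + K) * e.
  have g_neq_tg : g != (t * g)%g.
    by rewrite -{1}(mul1g g) (inj_eq (@mulIg _ g)) eq_sym.
  apply/ltW/(cnorm_lt_orthogonal_conj hA (b := a (t * g)%g) u_unit.1).
  - by case: (a_pos g).
  - exact: a_orth g_neq_tg.
  - by rewrite -alpha_conj alpha_a.
  - by apply: a_comm; rewrite inE eqxx.
have sum_near : nA (\sum_g a g - 1) < e.
  by have := sum_near1 1; rewrite mulr1 !inE eqxx orbT => /(_ isT).
have e_den : (#|G|%:R * (1 + K) + 1) * e = N by rewrite mulrC divfK ?gt_eqF.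
have := cnorm1_lt_sum hA a_small sum_near.
by rewrite mulrA -{2}[e]mul1r -mulrDl e_den ltxx.
Qed.
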